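(* Let $I\subseteq\mathbb{R}$ be an open interval (possibly unbounded), $\Sigma=I\times\mathbb{R}$, $m>1$ an integer, and let $F\in C^\omega(\Sigma,\mathbb{R}^2)$ be a non-singular map of the form $F(x,y)=\big(p_m(x)y^m+p_1(x)y+p_0(x),\;q_m(x)y^m+q_1(x)y+q_0(x)\big)$ with $p_m,q_m\in C^\omega(I,\mathbb{R})$. Set $d_{1m}(x)=p_1(x)q_m(x)-q_1(x)p_m(x)$ and $d^*_{1m}(x)=p_1'(x)q_m(x)-q_1'(x)p_m(x)$. Suppose at least one of the following holds: (i) $d_{1m}(x)\neq0$ for all $x\in I$; (ii) for every $x\in I$, $d_{1m}(x)=0$ implies $d^*_{1m}(x)\neq0$; (iii) $m$ is even and for every $x\in I$, $d_{1m}(x)=0$ implies $q_m(x)\neq0$; (iii$'$) $m$ is even and for every $x\in I$, $d_{1m}(x)=0$ implies $p_m(x)\neq0$; (iv) $m$ is odd and for every $x\in I$, $d_{1m}(x)=0$ implies $q_m(x)\neq0$ and $q_1(x)\le0$; (iv$'$) $m$ is odd and for every $x\in I$, $d_{1m}(x)=0$ implies $p_m(x)\neq0$ and $p_1(x)\le0$. Then $F$ is injective.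
   Context: For $F=(P,Q)$, $d_F=P_xQ_y-P_yQ_x$ is the Jacobian determinant; $F$ is non-singular if $d_F(x,y)\neq0$ for all $(x,y)\in\Sigma$. $C^\omega$ denotes real analytic functions. *)

From Stdlib Require Export Reals.
From Coquelicot Require Export Coquelicot.
Open Scope R_scope.

Definition in_interval (a b : Rbar) (x : R) : Prop :=
  Rbar_lt a (Finite x) /\ Rbar_lt (Finite x) b.

Definition analytic_on1 (U : R -> Prop) (f : R -> R) : Prop :=
  forall x0, U x0 ->
    exists r, 0 < r /\ exists c : nat -> R,
      forall x, U x -> Rabs (x - x0) < r ->
        is_pseries c (x - x0) (f x).

Definition analytic_on2 (U : R -> R -> Prop) (f : R -> R -> R) : Prop :=
  forall x0 y0, U x0 y0 ->
    exists r, 0 < r /\ exists c : nat -> nat -> R,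
      forall x y, U x y -> Rabs (x - x0) < r -> Rabs (y - y0) < r ->
        (forall n, ex_series (fun k => Rabs (c n k * (x - x0) ^ n * (y - y0) ^ k))) /\
        ex_series (fun n => Series (fun k => Rabs (c n k * (x - x0) ^ n * (y - y0) ^ k))) /\
        is_series (fun n => Series (fun k => c n k * (x - x0) ^ n * (y - y0) ^ k)) (f x y).

Definition jac_det (P Q : R -> R -> R) (x y : R) : R :=
  Derive (fun t => P t y) x * Derive (fun t => Q x t) y
  - Derive (fun t => P x t) y * Derive (fun t => Q t y) x.

(* Write V = (p_m, q_m).  Each of (i)-(iv') excludes V(x) = 0, since
   then d_1m(x) = d*_1m(x) = 0.
   Along a vertical line the Jacobian d_F is a polynomial in y of odd degree 2m-1
   whose leading coefficient is m times the Wronskian p_m' q_m - q_m' p_m; since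
   d_F never vanishes, the Wronskian vanishes identically and V keeps a constant
   direction E.  Rotating the target plane by E turns F into (A, B) with
   A = a_1(x) y + a_0(x) affine in y, B = v(x) y^m + b_1(x) y + b_0(x) and v <> 0.
   If m is even, a_1 has no zero: at a zero the Jacobian of (A, B) would factor
   through the odd-degree polynomial m v y^(m-1) + b_1.  If m is odd, the leading
   coefficient of that Jacobian gives (a_1^m / v)' = 0, so a_1 vanishes everywhere
   or nowhere.  When a_1 has no zero, B is strictly monotone along every level
   curve of A (mean value theorem); when a_1 = 0, both a_0 and B(x, .) are
   injective.  Analyticity is only used to make the coefficients differentiable. *)

From Stdlib Require Import Reals Arith Lra Lia.
From Coquelicot Require Import Coquelicot.
Open Scope R_scope.

(* auto_derive leaves eta-expanded [Derive (fun x => f x)] and unfolded [INR (S n)] behind. *)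
Ltac tidy_auto_derive :=
  repeat match goal with
  | |- context [Derive (fun t => ?f t) ?x] => change (Derive (fun t => f t) x) with (Derive f x)
  | |- context [match ?n with O => 1 | S _ => INR ?n + 1 end] =>
      change (match n with O => 1 | S _ => INR n + 1 end) with (INR (S n))
  end.

Lemma in_interval_open (a b : Rbar) (x0 : R) : in_interval a b x0 ->
  exists d, 0 < d /\ forall x, Rabs (x - x0) < d -> in_interval a b x.
Proof.
  unfold in_interval. intros [Ha Hb].
  destruct a as [a| |]; destruct b as [b| |]; simpl in *; try contradiction.
  - exists (Rmin (x0 - a) (b - x0)). split; [apply Rmin_pos; lra|].
    intros x Hx. apply Rabs_def2 in Hx.
    pose proof (Rmin_l (x0 - a) (b - x0)). pose proof (Rmin_r (x0 - a) (b - x0)). lra.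
  - exists (x0 - a). split; [lra|]. intros x Hx. apply Rabs_def2 in Hx. split; [lra|exact I].
  - exists (b - x0). split; [lra|]. intros x Hx. apply Rabs_def2 in Hx. split; [exact I|lra].
  - exists 1. split; [lra|]. intros; split; exact I.
Qed.

Lemma in_interval_between (a b : Rbar) (u w t : R) :
  in_interval a b u -> in_interval a b w -> Rmin u w <= t <= Rmax u w -> in_interval a b t.
Proof.
  unfold in_interval, Rmin, Rmax. intros [H1 H2] [H3 H4] Ht.
  destruct (Rle_dec u w);
    destruct a as [a| |]; destruct b as [b| |]; simpl in *; try contradiction; lra.
Qed.

Lemma interval_mvt (a b : Rbar) (f df : R -> R) (u w : R) :
  (forall t, in_interval a b t -> is_derive f t (df t)) ->
  in_interval a b u -> in_interval a b w ->
  exists c, in_interval a b c /\ f w - f u = df c * (w - u).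
Proof.
  intros Hf Hu Hw.
  assert (Hin : forall t, Rmin u w <= t <= Rmax u w -> in_interval a b t)
    by (intros t Ht; exact (in_interval_between a b u w t Hu Hw Ht)).
  destruct (MVT_gen f u w df) as [c [Hc Hmvt]].
  - intros t Ht. apply Hf, Hin. lra.
  - intros t Ht. apply derivable_continuous_pt, ex_derive_Reals_0.
    eexists. apply Hf, Hin, Ht.
  - exists c. split; [apply Hin, Hc | exact Hmvt].
Qed.

Lemma is_derive_0_const_on_interval (a b : Rbar) (f : R -> R) (u w : R) :
  (forall t, in_interval a b t -> is_derive f t 0) ->
  in_interval a b u -> in_interval a b w -> f u = f w.
Proof.
  intros Hf Hu Hw.
  destruct (interval_mvt a b f (fun _ => 0) u w Hf Hu Hw) as [c [_ Hc]]. lra.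
Qed.

Lemma is_derive_neq0_inj_on_interval (a b : Rbar) (f df : R -> R) (u w : R) :
  (forall t, in_interval a b t -> is_derive f t (df t)) ->
  (forall t, in_interval a b t -> df t <> 0) ->
  in_interval a b u -> in_interval a b w -> f u = f w -> u = w.
Proof.
  intros Hf Hdf Hu Hw Huw.
  destruct (interval_mvt a b f df u w Hf Hu Hw) as [c [Hc Hmvt]].
  rewrite Huw, Rminus_diag in Hmvt.
  destruct (Rmult_integral _ _ (eq_sym Hmvt)) as [H0|H0]; [now destruct (Hdf c Hc)|lra].
Qed.

Lemma is_derive_neq0_inj (f df : R -> R) (u w : R) :
  (forall t, is_derive f t (df t)) -> (forall t, df t <> 0) -> f u = f w -> u = w.
Proof.
  intros Hf Hdf.
  apply (is_derive_neq0_inj_on_interval m_infty p_infty f df); intros; auto; split; exact I.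
Qed.

Lemma pow_eq0 (x : R) (k : nat) : x ^ k = 0 -> x = 0.
Proof.
  intros Hk. destruct (Req_dec x 0) as [|Hx]; [assumption|].
  now destruct (pow_nonzero x k Hx).
Qed.

Lemma sum_sq_pos (x y : R) : x <> 0 \/ y <> 0 -> 0 < x ^ 2 + y ^ 2.
Proof.
  pose proof (pow2_ge_0 x). pose proof (pow2_ge_0 y).
  intros [Hxy|Hxy]; pose proof (pow2_gt_0 _ Hxy); lra.
Qed.

Lemma parallel_dot_neq0 (e1 e2 p q : R) :
  e1 <> 0 \/ e2 <> 0 -> p <> 0 \/ q <> 0 -> e1 * q - e2 * p = 0 -> e1 * p + e2 * q <> 0.
Proof.
  intros He Hv Hpar Hdot.
  assert (Lagrange : (e1 * p + e2 * q) ^ 2 + (e1 * q - e2 * p) ^ 2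
                     = (e1 ^ 2 + e2 ^ 2) * (p ^ 2 + q ^ 2)) by ring.
  rewrite Hpar, Hdot in Lagrange.
  pose proof (sum_sq_pos _ _ He). pose proof (sum_sq_pos _ _ Hv). nra.
Qed.

Definition lower_order (N : nat) (g : R -> R) : Prop :=
  exists K, forall y, 1 <= Rabs y -> Rabs (g y) <= K * Rabs y ^ N.

Lemma lower_order_monomial (N k : nat) (c : R) :
  (k <= N)%nat -> lower_order N (fun y => c * y ^ k).
Proof.
  intros Hk. exists (Rabs c). intros y Hy.
  rewrite Rabs_mult, <- RPow_abs.
  apply Rmult_le_compat_l; [apply Rabs_pos | apply Rle_pow; assumption].
Qed.

Lemma lower_order_plus (N : nat) (g h : R -> R) :
  lower_order N g -> lower_order N h -> lower_order N (fun y => g y + h y).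
Proof.
  intros [Kg Hg] [Kh Hh]. exists (Kg + Kh). intros y Hy.
  eapply Rle_trans; [apply Rabs_triang|].
  specialize (Hg y Hy). specialize (Hh y Hy). lra.
Qed.

Lemma lower_order_ext (N : nat) (g h : R -> R) :
  (forall y, g y = h y) -> lower_order N g -> lower_order N h.
Proof. intros Hgh [K HK]. exists K. intros y Hy. rewrite <- Hgh. auto. Qed.

Lemma pow_opp_odd (y : R) (k : nat) : Nat.Odd k -> (- y) ^ k = - y ^ k.
Proof.
  intros [p ->]. rewrite !pow_add, !pow_mult.
  replace ((- y) ^ 2) with (y ^ 2) by ring. ring.
Qed.

Lemma odd_degree_root (N : nat) (c : R) (f : R -> R) :
  Nat.Odd (S N) -> c <> 0 -> continuity f ->
  lower_order N (fun y => f y - c * y ^ S N) -> exists y, f y = 0.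
Proof.
  intros Hodd Hc Hf [K HK].
  assert (Hc_pos : 0 < Rabs c) by (apply Rabs_pos_lt, Hc).
  set (Y := 1 + Rabs K / Rabs c).
  assert (HY : 1 <= Y).
  { unfold Y. pose proof (Rabs_pos K).
    assert (0 <= Rabs K / Rabs c) by (apply Rdiv_le_0_compat; lra). lra. }
  assert (HYN : 0 < Y ^ N) by (apply pow_lt; lra).
  assert (Hdom : Rabs K * Y ^ N < Rabs c * Y ^ S N).
  { simpl. replace (Rabs c * (Y * Y ^ N)) with ((Rabs c * Y) * Y ^ N) by ring.
    apply Rmult_lt_compat_r; [exact HYN|]. unfold Y.
    replace (Rabs c * (1 + Rabs K / Rabs c)) with (Rabs c + Rabs K) by (field; lra). lra. }
  assert (Hrest : forall y, Rabs y = Y -> Rabs (f y - c * y ^ S N) < Rabs (c * Y ^ S N)).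
  { intros y Hy. rewrite Rabs_mult, (Rabs_pos_eq (Y ^ S N)) by (apply pow_le; lra).
    specialize (HK y ltac:(lra)). rewrite Hy in HK.
    pose proof (Rle_abs K). pose proof (Rmult_le_compat_r (Y ^ N) K (Rabs K) ltac:(lra) ltac:(lra)).
    lra. }
  assert (Hpos := Hrest Y ltac:(rewrite Rabs_pos_eq; lra)).
  assert (Hneg := Hrest (- Y) ltac:(rewrite Rabs_Ropp, Rabs_pos_eq; lra)).
  rewrite pow_opp_odd in Hneg by exact Hodd.
  set (L := c * Y ^ S N) in *.
  replace (c * - Y ^ S N) with (- L) in Hneg by (unfold L; ring).
  apply Rabs_def2 in Hpos. apply Rabs_def2 in Hneg.
  destruct (IVT_gen f (- Y) Y 0 Hf) as [y [_ Hy]].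
  - unfold Rmin, Rmax, Rabs in *.
    destruct (Rcase_abs L); destruct (Rle_dec (f (- Y)) (f Y)); lra.
  - exists y. exact Hy.
Qed.

Lemma odd_degree_lead_eq0 (N : nat) (c : R) (f : R -> R) :
  Nat.Odd (S N) -> continuity f ->
  lower_order N (fun y => f y - c * y ^ S N) -> (forall y, f y <> 0) -> c = 0.
Proof.
  intros Hodd Hf Hlow Hf0. destruct (Req_dec c 0) as [|Hc]; [assumption|].
  destruct (odd_degree_root N c f Hodd Hc Hf Hlow) as [y Hy]. now destruct (Hf0 y).
Qed.

Lemma continuity_of_ex_derive (f : R -> R) : (forall y, ex_derive f y) -> continuity f.
Proof. intros Hf y. apply derivable_continuous_pt, ex_derive_Reals_0, Hf. Qed.

Definition differentiable_on (U : R -> Prop) (f : R -> R) : Prop :=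
  forall x, U x -> ex_derive f x.

Lemma CV_radius_ge_of_ex_series (c : nat -> R) (z : R) :
  ex_series (fun k => c k * z ^ k) -> Rbar_le z (CV_radius c).
Proof.
  intros Hs.
  assert (Hlim : Un_cv (fun k => c k * z ^ k) 0)
    by (apply is_lim_seq_Reals, ex_series_lim_0, Hs).
  destruct (maj_by_pos _ (exist _ 0 Hlim)) as [M [_ HM]].
  apply (proj1 (CV_radius_bounded c)). exists M. exact HM.
Qed.

Lemma ex_derive_of_local_pseries (f : R -> R) (x0 r : R) (c : nat -> R) :
  0 < r -> (forall x, Rabs (x - x0) < r -> is_pseries c (x - x0) (f x)) ->
  ex_derive f x0.
Proof.
  intros Hr Hf.
  assert (Hrad : Rbar_lt (Rabs (x0 - x0)) (CV_radius c)).
  { rewrite Rminus_diag, Rabs_R0.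
    apply Rbar_lt_le_trans with (r / 2); [simpl; lra|].
    apply CV_radius_ge_of_ex_series.
    assert (Hr2 := Hf (x0 + r / 2)).
    replace (x0 + r / 2 - x0) with (r / 2) in Hr2 by ring.
    rewrite Rabs_pos_eq in Hr2 by lra.
    eexists. apply is_pseries_R, Hr2. lra. }
  exists (scal 1 (PSeries (PS_derive c) (x0 - x0))).
  apply is_derive_ext_loc with (fun x => PSeries c (x - x0)).
  - exists (mkposreal r Hr). intros x Hx. apply is_pseries_unique, Hf, Hx.
  - apply (is_derive_comp (PSeries c) (fun x => x - x0)).
    + apply is_derive_PSeries, Hrad.
    + auto_derive; auto.
Qed.

Lemma analytic_on1_differentiable (a b : Rbar) (f : R -> R) :
  analytic_on1 (in_interval a b) f -> differentiable_on (in_interval a b) f.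
Proof.
  intros Hf x0 Hx0.
  destruct (in_interval_open a b x0 Hx0) as [d [Hd Hin]].
  destruct (Hf x0 Hx0) as [r [Hr [c Hc]]].
  apply ex_derive_of_local_pseries with (Rmin r d) c; [apply Rmin_pos; lra|].
  intros x Hx. apply Hc.
  - apply Hin. eapply Rlt_le_trans; [exact Hx | apply Rmin_r].
  - eapply Rlt_le_trans; [exact Hx | apply Rmin_l].
Qed.

Lemma analytic_on2_section (U : R -> Prop) (f : R -> R -> R) (y0 : R) :
  analytic_on2 (fun x _ => U x) f -> analytic_on1 U (fun x => f x y0).
Proof.
  intros Hf x0 Hx0. destruct (Hf x0 y0 Hx0) as [r [Hr [c Hc]]].
  exists r. split; [exact Hr|]. exists (fun k => c k O).
  intros x Hx Hxr.
  assert (Hy : Rabs (y0 - y0) < r) by (rewrite Rminus_diag, Rabs_R0; exact Hr).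
  destruct (Hc x y0 Hx Hxr Hy) as [_ [_ Hsum]].
  apply is_pseries_R. eapply is_series_ext; [|exact Hsum].
  intros k. rewrite Rminus_diag. simpl.
  rewrite <- (PSeries_0 (fun j => c k j * (x - x0) ^ k)).
  apply Series_ext. reflexivity.
Qed.

Definition trinomial (m : nat) (c c1 c0 : R -> R) (x y : R) : R :=
  c x * y ^ m + c1 x * y + c0 x.

Lemma trinomial_coefs_differentiable (U : R -> Prop) (m : nat) (c c1 c0 : R -> R) :
  (0 < m)%nat -> differentiable_on U c ->
  (forall y, differentiable_on U (fun x => trinomial m c c1 c0 x y)) ->
  differentiable_on U c1 /\ differentiable_on U c0.
Proof.
  intros Hm Hc HP.
  assert (Hc0 : differentiable_on U c0).
  { assert (E : forall t, trinomial m c c1 c0 t 0 = c0 t)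
      by (intros t; unfold trinomial; rewrite pow_i by exact Hm; ring).
    intros x Hx. exact (ex_derive_ext _ _ x E (HP 0 x Hx)). }
  split; [|exact Hc0].
  assert (E : forall t, trinomial m c c1 c0 t 1 - c t - c0 t = c1 t)
    by (intros t; unfold trinomial; rewrite pow1; ring).
  intros x Hx. apply (ex_derive_ext _ _ x E).
  pose proof (HP 1 x Hx). pose proof (Hc x Hx). pose proof (Hc0 x Hx).
  auto_derive; auto.
Qed.

Lemma Derive_trinomial_x (m : nat) (c c1 c0 : R -> R) (x y : R) :
  ex_derive c x -> ex_derive c1 x -> ex_derive c0 x ->
  Derive (fun t => trinomial m c c1 c0 t y) x
  = trinomial m (Derive c) (Derive c1) (Derive c0) x y.
Proof.
  intros Hc Hc1 Hc0. unfold trinomial. apply is_derive_unique.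
  auto_derive; [auto | rewrite !Rmult_1_l; reflexivity].
Qed.

Lemma Derive_trinomial_y (n : nat) (c c1 c0 : R -> R) (x y : R) :
  Derive (fun t => trinomial (S n) c c1 c0 x t) y = INR (S n) * c x * y ^ n + c1 x.
Proof. unfold trinomial. apply is_derive_unique. auto_derive; [auto | simpl; ring]. Qed.

Lemma jac_det_trinomial (n : nat) (p p1 p0 q q1 q0 : R -> R) (x y : R) :
  ex_derive p x -> ex_derive p1 x -> ex_derive p0 x ->
  ex_derive q x -> ex_derive q1 x -> ex_derive q0 x ->
  jac_det (trinomial (S n) p p1 p0) (trinomial (S n) q q1 q0) x y
  = trinomial (S n) (Derive p) (Derive p1) (Derive p0) x y * (INR (S n) * q x * y ^ n + q1 x)
    - (INR (S n) * p x * y ^ n + p1 x) * trinomial (S n) (Derive q) (Derive q1) (Derive q0) x y.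
Proof.
  intros. unfold jac_det.
  rewrite !Derive_trinomial_x, !Derive_trinomial_y by assumption. reflexivity.
Qed.

Lemma jac_det_rotate (P Q : R -> R -> R) (e1 e2 x y : R) :
  ex_derive (fun t => P t y) x -> ex_derive (fun t => Q t y) x ->
  ex_derive (fun t => P x t) y -> ex_derive (fun t => Q x t) y ->
  jac_det (fun x y => e1 * Q x y - e2 * P x y) (fun x y => e1 * P x y + e2 * Q x y) x y
  = - (e1 ^ 2 + e2 ^ 2) * jac_det P Q x y.
Proof.
  intros HPx HQx HPy HQy. unfold jac_det.
  rewrite !Derive_minus, !Derive_plus, !Derive_scal by (apply ex_derive_scal; assumption).
  change (Derive (P x) y) with (Derive (fun t => P x t) y).
  change (Derive (Q x) y) with (Derive (fun t => Q x t) y).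
  ring.
Qed.

Lemma jac_det_ext_on_interval (a b : Rbar) (P Q P' Q' : R -> R -> R) (x y : R) :
  (forall x y, in_interval a b x -> P x y = P' x y) ->
  (forall x y, in_interval a b x -> Q x y = Q' x y) ->
  in_interval a b x -> jac_det P Q x y = jac_det P' Q' x y.
Proof.
  intros HP HQ Hx. destruct (in_interval_open a b x Hx) as [d [Hd Hnear]].
  assert (Hloc : forall F G : R -> R -> R, (forall x y, in_interval a b x -> F x y = G x y) ->
            Derive (fun t => F t y) x = Derive (fun t => G t y) x).
  { intros F G HFG. apply Derive_ext_loc. exists (mkposreal d Hd).
    intros t Ht. apply HFG, Hnear, Ht. }
  unfold jac_det.
  rewrite (Hloc P P' HP), (Hloc Q Q' HQ),
    (Derive_ext (fun t => P x t) (fun t => P' x t)), (Derive_ext (fun t => Q x t) (fun t => Q' x t));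
    auto.
Qed.

Lemma wronskian_eq0_parallel (a b : Rbar) (f g : R -> R) (x0 x : R) :
  differentiable_on (in_interval a b) f -> differentiable_on (in_interval a b) g ->
  (forall t, in_interval a b t -> f t <> 0 \/ g t <> 0) ->
  (forall t, in_interval a b t -> Derive f t * g t - Derive g t * f t = 0) ->
  in_interval a b x0 -> in_interval a b x -> f x0 * g x - g x0 * f x = 0.
Proof.
  intros Hf Hg Hfg HW Hx0 Hx.
  (* |(f x0, g x0)|^2 times the squared sine of the angle between (f x0, g x0) and (f t, g t) *)
  set (phi := fun t => (f x0 * g t - g x0 * f t) ^ 2 / (f t ^ 2 + g t ^ 2)).
  assert (Hphi : forall t, in_interval a b t -> is_derive phi t 0).
  { intros t Ht. pose proof (sum_sq_pos _ _ (Hfg t Ht)).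
    pose proof (Hf t Ht). pose proof (Hg t Ht).
    unfold phi. auto_derive; [repeat split; auto; lra|].
    transitivity (- 2 * (f x0 * g t - g x0 * f t) * (Derive f t * g t - Derive g t * f t)
                  * (f x0 * f t + g x0 * g t) / (f t ^ 2 + g t ^ 2) ^ 2).
    - tidy_auto_derive. field. lra.
    - rewrite (HW t Ht). field. lra. }
  assert (Hphi0 : phi x0 = 0) by (unfold phi, Rdiv; ring).
  pose proof (is_derive_0_const_on_interval a b phi x x0 Hphi Hx Hx0) as Hconst.
  rewrite Hphi0 in Hconst. unfold phi in Hconst.
  pose proof (sum_sq_pos _ _ (Hfg x Hx)).
  apply Rmult_integral in Hconst. destruct Hconst as [Hsq|Hinv].
  - exact (pow_eq0 _ 2 Hsq).
  - exfalso. apply (Rinv_neq_0_compat (f x ^ 2 + g x ^ 2)); lra.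
Qed.

Definition injective_on_strip (a b : Rbar) (P Q : R -> R -> R) : Prop :=
  forall x1 y1 x2 y2, in_interval a b x1 -> in_interval a b x2 ->
    P x1 y1 = P x2 y2 -> Q x1 y1 = Q x2 y2 -> x1 = x2 /\ y1 = y2.

Section AffineTrinomialMap.

Variables (a b : Rbar) (n : nat) (a1 a0 v b1 b0 : R -> R).
Let I := in_interval a b.
Hypothesis n_gt0 : (0 < n)%nat.
Hypotheses (a1_diff : differentiable_on I a1) (a0_diff : differentiable_on I a0)
  (v_diff : differentiable_on I v) (b1_diff : differentiable_on I b1)
  (b0_diff : differentiable_on I b0).
Hypothesis v_neq0 : forall x, I x -> v x <> 0.
Let A x y := a1 x * y + a0 x.
Let B := trinomial (S n) v b1 b0.
Hypothesis jac_neq0 : forall x y, I x -> jac_det A B x y <> 0.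

Let jacAB x y := (Derive a1 x * y + Derive a0 x) * (INR (S n) * v x * y ^ n + b1 x)
  - a1 x * trinomial (S n) (Derive v) (Derive b1) (Derive b0) x y.

Lemma jacAB_neq0 (x y : R) : I x -> jacAB x y <> 0.
Proof.
  intros Hx.
  assert (HAx : Derive (fun t => A t y) x = Derive a1 x * y + Derive a0 x).
  { apply is_derive_unique. unfold A. auto_derive; [auto | tidy_auto_derive; ring]. }
  assert (HAy : Derive (fun t => A x t) y = a1 x).
  { apply is_derive_unique. unfold A. auto_derive; [auto | ring]. }
  pose proof (jac_neq0 x y Hx) as Hjac.
  unfold jac_det, B in Hjac.
  rewrite HAx, HAy, Derive_trinomial_x, Derive_trinomial_y in Hjac by auto.
  exact Hjac.
Qed.

Lemma a1_root_factor (x : R) : I x -> a1 x = 0 ->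
  Derive a0 x <> 0 /\ forall y, INR (S n) * v x * y ^ n + b1 x <> 0.
Proof.
  intros Hx Ha1.
  assert (Hfactor : forall y,
    jacAB x y = (Derive a1 x * y + Derive a0 x) * (INR (S n) * v x * y ^ n + b1 x))
    by (intros y; unfold jacAB; rewrite Ha1; ring).
  assert (Hda1 : Derive a1 x = 0).
  { destruct (Req_dec (Derive a1 x) 0) as [|Hda1]; [assumption|].
    destruct (jacAB_neq0 x (- Derive a0 x / Derive a1 x) Hx).
    rewrite Hfactor. field_simplify; [ring | exact Hda1]. }
  assert (Hne : forall y, Derive a0 x * (INR (S n) * v x * y ^ n + b1 x) <> 0).
  { intros y. replace (Derive a0 x * _) with (jacAB x y) by (rewrite Hfactor, Hda1; ring).
    apply jacAB_neq0, Hx. }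
  split.
  - intros Hda0. apply (Hne 0). rewrite Hda0. ring.
  - intros y Hy. apply (Hne y). rewrite Hy. ring.
Qed.

Lemma a1_neq0_of_odd : Nat.Odd n -> forall x, I x -> a1 x <> 0.
Proof.
  intros Hodd x Hx Ha1. destruct (a1_root_factor x Hx Ha1) as [_ Hnoroot].
  assert (Hn : S (pred n) = n) by lia.
  destruct (odd_degree_root (pred n) (INR (S n) * v x)
              (fun y => INR (S n) * v x * y ^ n + b1 x)) as [y Hy].
  - rewrite Hn. exact Hodd.
  - apply Rmult_integral_contrapositive. split; [apply not_0_INR; lia | apply v_neq0, Hx].
  - apply continuity_of_ex_derive. intros y. auto_derive; auto.
  - rewrite Hn. apply (lower_order_ext _ (fun y => b1 x * y ^ 0)).
    + intros y. simpl. ring.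
    + apply lower_order_monomial. lia.
  - exact (Hnoroot y Hy).
Qed.

Lemma a1_lead_eq0_of_even : Nat.Even n ->
  forall x, I x -> INR (S n) * Derive a1 x * v x - a1 x * Derive v x = 0.
Proof.
  intros Heven x Hx.
  apply (odd_degree_lead_eq0 n _ (jacAB x)).
  - apply Nat.Odd_succ, Heven.
  - apply continuity_of_ex_derive. intros y. unfold jacAB, trinomial. auto_derive; auto.
  - apply (lower_order_ext _ (fun y => INR (S n) * Derive a0 x * v x * y ^ n
             + (Derive a1 x * b1 x - a1 x * Derive b1 x) * y ^ 1
             + (Derive a0 x * b1 x - a1 x * Derive b0 x) * y ^ 0)).
    + intros y. unfold jacAB, trinomial. simpl pow. ring.
    + repeat apply lower_order_plus; apply lower_order_monomial; lia.
  - intros y. apply jacAB_neq0, Hx.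
Qed.

Lemma a1_eq0_everywhere : Nat.Even n ->
  forall x0 x, I x0 -> I x -> a1 x0 = 0 -> a1 x = 0.
Proof.
  intros Heven x0 x Hx0 Hx Ha1.
  set (psi := fun t => a1 t ^ S n / v t).
  assert (Hpsi : forall t, I t -> is_derive psi t 0).
  { intros t Ht. pose proof (v_neq0 t Ht). pose proof (a1_diff t Ht). pose proof (v_diff t Ht).
    unfold psi. auto_derive; [auto|].
    transitivity (a1 t ^ n * (INR (S n) * Derive a1 t * v t - a1 t * Derive v t) / v t ^ 2).
    - tidy_auto_derive. field. assumption.
    - rewrite (a1_lead_eq0_of_even Heven t Ht). field. assumption. }
  pose proof (is_derive_0_const_on_interval a b psi x x0 Hpsi Hx Hx0) as Hconst.
  unfold psi in Hconst. rewrite Ha1, pow_i, Rdiv_0_l in Hconst by lia.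
  apply (pow_eq0 _ (S n)).
  apply (Rmult_eq_reg_r (/ v x)); [rewrite Rmult_0_l; exact Hconst|].
  apply Rinv_neq_0_compat, v_neq0, Hx.
Qed.

Lemma injective_of_a1_neq0 : (forall x, I x -> a1 x <> 0) -> injective_on_strip a b A B.
Proof.
  intros Ha1 u yu w yw Hu Hw HA HB.
  (* follow B along the level curve A = A u yu, parametrised by x *)
  set (C := A u yu).
  set (Y := fun t => (C - a0 t) / a1 t).
  set (h := fun t => B t (Y t)).
  assert (Hh : forall t, I t -> is_derive h t (- jacAB t (Y t) / a1 t)).
  { intros t Ht. pose proof (Ha1 t Ht).
    pose proof (a1_diff t Ht). pose proof (a0_diff t Ht).
    pose proof (v_diff t Ht). pose proof (b1_diff t Ht). pose proof (b0_diff t Ht).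
    unfold h, B, Y, trinomial. auto_derive; [repeat split; auto|].
    unfold jacAB, trinomial. tidy_auto_derive.
    change ((C - a0 t) / a1 t) with ((C + - a0 t) * / a1 t). simpl pow. field. assumption. }
  assert (HYu : Y u = yu) by (unfold Y, C, A; field; apply Ha1, Hu).
  assert (HYw : Y w = yw) by (unfold Y, C; rewrite HA; unfold A; field; apply Ha1, Hw).
  destruct (interval_mvt a b h _ u w Hh Hu Hw) as [c [Hc Hmvt]].
  unfold h in Hmvt. rewrite HYu, HYw, HB, Rminus_diag in Hmvt.
  assert (Huw : u = w).
  { destruct (Rmult_integral _ _ (eq_sym Hmvt)) as [Hjac|]; [|lra].
    exfalso. apply (jacAB_neq0 c (Y c) Hc).
    replace (jacAB c (Y c)) with (- (- jacAB c (Y c) / a1 c) * a1 c) by (field; apply Ha1, Hc).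
    rewrite Hjac. ring. }
  subst w. split; [reflexivity|].
  apply (Rmult_eq_reg_l (a1 u)); [|apply Ha1, Hu].
  unfold A in HA. lra.
Qed.

Lemma injective_of_a1_eq0 : (forall x, I x -> a1 x = 0) -> injective_on_strip a b A B.
Proof.
  intros Ha1 u yu w yw Hu Hw HA HB.
  assert (Huw : u = w).
  { apply (is_derive_neq0_inj_on_interval a b a0 (Derive a0)); auto.
    - intros t Ht. apply Derive_correct, a0_diff, Ht.
    - intros t Ht. apply (a1_root_factor t Ht (Ha1 t Ht)).
    - unfold A in HA. rewrite (Ha1 u Hu), (Ha1 w Hw) in HA. lra. }
  subst w. split; [reflexivity|].
  destruct (a1_root_factor u Hu (Ha1 u Hu)) as [_ Hnoroot].
  apply (is_derive_neq0_inj (B u) (fun y => INR (S n) * v u * y ^ n + b1 u)); auto.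
  intros y. unfold B, trinomial. auto_derive; [auto|]. simpl. ring.
Qed.

Theorem affine_trinomial_injective : injective_on_strip a b A B.
Proof.
  destruct (Nat.Even_or_Odd n) as [Heven|Hodd].
  - intros u yu w yw Hu Hw. destruct (Req_dec (a1 u) 0) as [Hu0|Hu0].
    + apply injective_of_a1_eq0; [|assumption..].
      intros x Hx. exact (a1_eq0_everywhere Heven u x Hu Hx Hu0).
    + apply injective_of_a1_neq0; [|assumption..].
      intros x Hx Hx0. exact (Hu0 (a1_eq0_everywhere Heven x u Hx Hu Hx0)).
  - apply injective_of_a1_neq0, a1_neq0_of_odd, Hodd.
Qed.

End AffineTrinomialMap.

Section TrinomialMap.

Variables (a b : Rbar) (n : nat) (pm p1 p0 qm q1 q0 : R -> R).
Let I := in_interval a b.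
Hypothesis n_gt0 : (0 < n)%nat.
Hypotheses (pm_diff : differentiable_on I pm)
  (p1_diff : differentiable_on I p1)
  (p0_diff : differentiable_on I p0)
  (qm_diff : differentiable_on I qm)
  (q1_diff : differentiable_on I q1)
  (q0_diff : differentiable_on I q0).
Hypothesis lead_neq0 : forall x, I x -> pm x <> 0 \/ qm x <> 0.
Let P := trinomial (S n) pm p1 p0.
Let Q := trinomial (S n) qm q1 q0.
Hypothesis jac_neq0 : forall x y, I x -> jac_det P Q x y <> 0.

Lemma lead_wronskian_eq0 (x : R) : I x ->
  Derive pm x * qm x - Derive qm x * pm x = 0.
Proof.
  intros Hx.
  set (jacPQ := fun y =>
    trinomial (S n) (Derive pm) (Derive p1) (Derive p0) x y * (INR (S n) * qm x * y ^ n + q1 x)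
    - (INR (S n) * pm x * y ^ n + p1 x) * trinomial (S n) (Derive qm) (Derive q1) (Derive q0) x y).
  assert (Hlead : INR (S n) * (Derive pm x * qm x - Derive qm x * pm x) = 0).
  { apply (odd_degree_lead_eq0 (n + n) _ jacPQ).
    - exists n. lia.
    - apply continuity_of_ex_derive. intros y. unfold jacPQ, trinomial. auto_derive; auto.
    - apply (lower_order_ext _ (fun y =>
          (Derive pm x * q1 x + INR (S n) * Derive p1 x * qm x
           - INR (S n) * pm x * Derive q1 x - p1 x * Derive qm x) * y ^ S n
          + INR (S n) * (Derive p0 x * qm x - pm x * Derive q0 x) * y ^ n
          + (Derive p1 x * q1 x - p1 x * Derive q1 x) * y ^ 1
          + (Derive p0 x * q1 x - p1 x * Derive q0 x) * y ^ 0)).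
      + intros y. unfold jacPQ, trinomial.
        change (S (n + n)) with (S n + n)%nat. rewrite pow_add. simpl pow. ring.
      + repeat apply lower_order_plus; apply lower_order_monomial; lia.
    - intros y. unfold jacPQ. rewrite <- jac_det_trinomial by auto. apply jac_neq0, Hx. }
  destruct (Rmult_integral _ _ Hlead) as [Hm|]; [|assumption].
  now destruct (not_0_INR (S n)).
Qed.

Section Rotation.

Variables e1 e2 : R.
Hypothesis e_neq0 : e1 <> 0 \/ e2 <> 0.
Hypothesis e_parallel : forall x, I x -> e1 * qm x - e2 * pm x = 0.

Let a1 t := e1 * q1 t - e2 * p1 t.
Let a0 t := e1 * q0 t - e2 * p0 t.
Let v t := e1 * pm t + e2 * qm t.
Let b1 t := e1 * p1 t + e2 * q1 t.
Let b0 t := e1 * p0 t + e2 * q0 t.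

Lemma rotated_first_affine (x y : R) : I x ->
  e1 * Q x y - e2 * P x y = a1 x * y + a0 x.
Proof.
  intros Hx. transitivity ((e1 * qm x - e2 * pm x) * y ^ S n + (a1 x * y + a0 x)).
  - unfold P, Q, trinomial, a1, a0. ring.
  - rewrite (e_parallel x Hx). ring.
Qed.

Lemma rotated_second (x y : R) :
  e1 * P x y + e2 * Q x y = trinomial (S n) v b1 b0 x y.
Proof. unfold P, Q, trinomial, v, b1, b0. ring. Qed.

Lemma rotated_jac_neq0 (x y : R) : I x ->
  jac_det (fun x y => a1 x * y + a0 x) (trinomial (S n) v b1 b0) x y <> 0.
Proof.
  intros Hx.
  rewrite <- (jac_det_ext_on_interval a b
                (fun x y => e1 * Q x y - e2 * P x y) (fun x y => e1 * P x y + e2 * Q x y));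
    [| intros; apply rotated_first_affine; assumption
     | intros; apply rotated_second
     | assumption].
  pose proof (pm_diff x Hx). pose proof (p1_diff x Hx). pose proof (p0_diff x Hx).
  pose proof (qm_diff x Hx). pose proof (q1_diff x Hx). pose proof (q0_diff x Hx).
  rewrite jac_det_rotate by (unfold P, Q, trinomial; auto_derive; auto).
  apply Rmult_integral_contrapositive. split.
  - pose proof (sum_sq_pos _ _ e_neq0). lra.
  - apply jac_neq0, Hx.
Qed.

Lemma rotated_injective : injective_on_strip a b P Q.
Proof.
  intros x1 y1 x2 y2 Hx1 Hx2 HP HQ.
  apply (affine_trinomial_injective a b n a1 a0 v b1 b0); auto.
  - intros x Hx. unfold a1. pose proof (p1_diff x Hx). pose proof (q1_diff x Hx). auto_derive; auto.
  - intros x Hx. unfold a0. pose proof (p0_diff x Hx). pose proof (q0_diff x Hx). auto_derive; auto.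
  - intros x Hx. unfold v. pose proof (pm_diff x Hx). pose proof (qm_diff x Hx). auto_derive; auto.
  - intros x Hx. unfold b1. pose proof (p1_diff x Hx). pose proof (q1_diff x Hx). auto_derive; auto.
  - intros x Hx. unfold b0. pose proof (p0_diff x Hx). pose proof (q0_diff x Hx). auto_derive; auto.
  - intros x Hx. apply parallel_dot_neq0; auto.
  - apply rotated_jac_neq0.
  - rewrite <- !rotated_first_affine, HP, HQ by assumption. reflexivity.
  - rewrite <- !rotated_second, HP, HQ. reflexivity.
Qed.

End Rotation.

Theorem trinomial_map_injective : injective_on_strip a b P Q.
Proof.
  intros x1 y1 x2 y2 Hx1 Hx2.
  apply (rotated_injective (pm x1) (qm x1)); [apply lead_neq0; assumption | | assumption..].
  intros x Hx.
  apply (wronskian_eq0_parallel a b pm qm); auto. exact lead_wronskian_eq0.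
Qed.

End TrinomialMap.

Theorem theorem2 (a b : Rbar) (m : nat) (Hm : (1 < m)%nat)
  (pm p1 p0 qm q1 q0 : R -> R) :
  let Sigma := fun x y : R => in_interval a b x in
  let P := fun x y => pm x * y ^ m + p1 x * y + p0 x in
  let Q := fun x y => qm x * y ^ m + q1 x * y + q0 x in
  let d1m := fun x => p1 x * qm x - q1 x * pm x in
  let d1m_star := fun x => Derive p1 x * qm x - Derive q1 x * pm x in
  (* F = (P,Q) is real analytic on Sigma = I x R *)
  analytic_on2 Sigma P -> analytic_on2 Sigma Q ->
  (* p_m, q_m are real analytic on I *)
  analytic_on1 (in_interval a b) pm -> analytic_on1 (in_interval a b) qm ->
  (* F is non-singular on Sigma *)
  (forall x y, Sigma x y -> jac_det P Q x y <> 0) ->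
  ( (forall x, in_interval a b x -> d1m x <> 0)
    \/ (forall x, in_interval a b x -> d1m x = 0 -> d1m_star x <> 0)
    \/ (Nat.Even m /\ forall x, in_interval a b x -> d1m x = 0 -> qm x <> 0)
    \/ (Nat.Even m /\ forall x, in_interval a b x -> d1m x = 0 -> pm x <> 0)
    \/ (Nat.Odd m /\ forall x, in_interval a b x -> d1m x = 0 ->
          qm x <> 0 /\ q1 x <= 0)
    \/ (Nat.Odd m /\ forall x, in_interval a b x -> d1m x = 0 ->
          pm x <> 0 /\ p1 x <= 0) ) ->
  (* F is injective on Sigma *)
  forall x1 y1 x2 y2, Sigma x1 y1 -> Sigma x2 y2 ->
    P x1 y1 = P x2 y2 -> Q x1 y1 = Q x2 y2 -> x1 = x2 /\ y1 = y2.
Proof.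
  destruct m as [|n]; [lia|].
  cbv zeta. intros HP_an HQ_an Hpm_an Hqm_an Hjac Hcase.
  pose proof (analytic_on1_differentiable a b pm Hpm_an) as Hpm.
  pose proof (analytic_on1_differentiable a b qm Hqm_an) as Hqm.
  destruct (trinomial_coefs_differentiable (in_interval a b) (S n) pm p1 p0) as [Hp1 Hp0];
    [lia | exact Hpm | intros y; apply analytic_on1_differentiable, analytic_on2_section, HP_an |].
  destruct (trinomial_coefs_differentiable (in_interval a b) (S n) qm q1 q0) as [Hq1 Hq0];
    [lia | exact Hqm | intros y; apply analytic_on1_differentiable, analytic_on2_section, HQ_an |].
  apply (trinomial_map_injective a b n pm p1 p0 qm q1 q0); [lia | assumption.. | | exact Hjac].
  intros x Hx.
  destruct (Req_dec (pm x) 0) as [Hp|Hp]; [|left; exact Hp].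
  destruct (Req_dec (qm x) 0) as [Hq|Hq]; [|right; exact Hq].
  assert (Hd : p1 x * qm x - q1 x * pm x = 0) by (rewrite Hp, Hq; ring).
  exfalso. destruct Hcase as [H|[H|[[_ H]|[[_ H]|[[_ H]|[_ H]]]]]].
  - exact (H x Hx Hd).
  - apply (H x Hx Hd). rewrite Hp, Hq. ring.
  - exact (H x Hx Hd Hq).
  - exact (H x Hx Hd Hp).
  - exact (proj1 (H x Hx Hd) Hq).
  - exact (proj1 (H x Hx Hd) Hp).
Qed.
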